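(* Let $X$ and $Y$ be real Banach spaces with $Y\neq\{0\}$. Then $L(X,Y)=\{f\in Lip_0(X,Y):\gamma(f)=0\ \text{for all}\ \gamma\in\ker(\beta_X^Y)\}$.
   Context: $Lip_0(X,Y)$ is the Banach space of Lipschitz maps $f:X\to Y$ with $f(0)=0$ and norm $Lip(f)=\sup_{x\neq y}\|f(x)-f(y)\|/\|x-y\|$; $L(X,Y)$ (bounded linear operators) is regarded as a subspace of it. For $x\in X$, $\delta_x^Y\in L(Lip_0(X,Y),Y)$ is evaluation $\delta_x^Y(f)=f(x)$. $F_Y(X)$ is the norm-closed linear span of $\{\delta_x^Y:x\in X\}$ in $L(Lip_0(X,Y),Y)$. $\beta_X^Y:F_Y(X)\to X$ is the bounded linear contraction with $\beta_X^Y(\sum_i\alpha_i\delta_{x_i}^Y)=\sum_i\alpha_ix_i$ on finite combinations, extended by continuity. *)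

From HB Require Import structures.
From mathcomp Require Import all_boot all_order all_algebra.
From mathcomp Require Import all_classical all_reals all_analysis.
Set Implicit Arguments. Unset Strict Implicit. Unset Printing Implicit Defensive.
Import Order.TTheory GRing.Theory Num.Theory.
Import numFieldNormedType.Exports.
Local Open Scope classical_set_scope.
Local Open Scope ring_scope.

Section LipFree.
Variables (R : realType) (X Y : completeNormedModType R).

Definition lip_quotients (f : X -> Y) : set R :=
  [set r | exists x y : X, x != y /\ r = `|f x - f y| / `|x - y|].

Definition Lipnorm (f : X -> Y) : R := sup (lip_quotients f).

Definition Lip0 (f : X -> Y) : Prop :=
  f 0 = 0 /\ has_ubound (lip_quotients f).

Definition bounded_linear (f : X -> Y) : Prop :=
  (forall (a : R) (x y : X), f (a *: x + y) = a *: f x + f y) /\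
  exists C : R, forall x : X, `|f x| <= C * `|x|.

(* Elements of L(Lip_0(X,Y),Y) are represented by maps (X -> Y) -> Y,
   of which only the restriction to Lip_0(X,Y) is relevant. *)
Definition lipdual_op (G : (X -> Y) -> Y) : Prop :=
  (forall (a : R) (f g : X -> Y), Lip0 f -> Lip0 g ->
      G (fun x => a *: f x + g x) = a *: G f + G g) /\
  exists C : R, forall f, Lip0 f -> `|G f| <= C * Lipnorm f.

Definition opnorm (G : (X -> Y) -> Y) : R :=
  sup [set `|G f| | f in [set f | Lip0 f /\ Lipnorm f <= 1]].

Definition delta (x : X) : (X -> Y) -> Y := fun f => f x.

Definition comb (s : seq (R * X)) : (X -> Y) -> Y :=
  fun f => \sum_(p <- s) p.1 *: delta p.2 f.

Definition beta_comb (s : seq (R * X)) : X := \sum_(p <- s) p.1 *: p.2.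

(* F_Y(X): norm-closure of span{delta_x} in L(Lip_0(X,Y),Y) *)
Definition FY (G : (X -> Y) -> Y) : Prop :=
  lipdual_op G /\
  forall e : R, 0 < e -> exists s : seq (R * X),
      opnorm (fun f => G f - comb s f) <= e.

(* beta_X^Y(G) = x, beta being the extension by continuity of beta_comb:
   x is the limit of beta_comb (s n) for finite combinations s n
   converging to G in operator norm. *)
Definition beta_is (G : (X -> Y) -> Y) (x : X) : Prop :=
  exists s : nat -> seq (R * X),
    (fun n => opnorm (fun f => G f - comb (s n) f)) @ \oo --> (0 : R) /\
    (fun n => beta_comb (s n)) @ \oo --> x.

Definition in_ker_beta (G : (X -> Y) -> Y) : Prop := FY G /\ beta_is G 0.

End LipFree.

From HB Require Import structures.
From mathcomp Require Import all_boot all_order all_algebra.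
From mathcomp Require Import all_classical all_reals all_analysis.
Import Order.TTheory GRing.Theory Num.Theory.
Import numFieldNormedType.Exports.
Local Open Scope classical_set_scope.
Local Open Scope ring_scope.

(* A bounded linear f commutes with finite combinations of evaluations:
   (sum_i a_i delta_{x_i}) f = f (sum_i a_i x_i).  If G is in ker(beta), it
   is an operator-norm limit of such combinations whose beta-images tend to 0,
   so G f is the limit of f applied to a null sequence, i.e. 0.  Conversely,
   delta_{a x + y} - a delta_x - delta_y is a finite combination with
   beta-image 0, so any f annihilated by ker(beta) is linear; a Lipschitz map
   vanishing at 0 is then bounded. *)

Set Implicit Arguments.
Unset Strict Implicit.
Unset Printing Implicit Defensive.

Lemma cvg0_norm_le (R : realType) (V : normedModType R) (u : nat -> V)
    (v : nat -> R) :
  (forall n, `|u n| <= v n) -> v @ \oo --> 0 -> u @ \oo --> 0.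
Proof.
move=> uv v0; apply: norm_cvg0; apply: (squeeze_cvgr _ (cvg_cst 0) v0).
by near=> n; rewrite normr_ge0 uv.
Unshelve. all: end_near. Qed.

Section LipschitzNorm.
Variables (R : realType) (X Y : completeNormedModType R).
Implicit Types (f : X -> Y) (c : R).

Lemma lip_quotients_ubound f c :
  (forall x y, `|f x - f y| <= c * `|x - y|) -> ubound (lip_quotients f) c.
Proof.
move=> fc r [x [y [xy ->]]].
by rewrite ler_pdivrMr // normr_gt0 subr_eq0.
Qed.

Lemma Lip0_intro f c :
  f 0 = 0 -> (forall x y, `|f x - f y| <= c * `|x - y|) -> Lip0 f.
Proof. by move=> f0 fc; split => //; exists c; exact: lip_quotients_ubound. Qed.

Lemma Lipnorm_le f c :
  (forall x y, `|f x - f y| <= c * `|x - y|) -> 0 <= c -> Lipnorm f <= c.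
Proof.
move=> fc c0; rewrite /Lipnorm.
have [ne|/nonemptyPn->] := pselect (lip_quotients f !=set0); last first.
  by rewrite sup0.
exact/ge_sup/lip_quotients_ubound.
Qed.

Lemma Lipnorm_ge0 f : Lip0 f -> 0 <= Lipnorm f.
Proof.
move=> [_ fub]; rewrite /Lipnorm.
have [[r fr]|/nonemptyPn->] := pselect (lip_quotients f !=set0); last first.
  by rewrite sup0.
apply: le_trans (ub_le_sup fub fr).
by case: fr => x [y [_ ->]]; rewrite divr_ge0.
Qed.

Lemma normB_le_Lipnorm f x y :
  Lip0 f -> `|f x - f y| <= Lipnorm f * `|x - y|.
Proof.
move=> [_ fub]; have [->|xy] := eqVneq x y.
  by rewrite !subrr !normr0 mulr0.
rewrite -ler_pdivrMr ?normr_gt0 ?subr_eq0 //.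
by apply: (ub_le_sup fub); exists x, y.
Qed.

Lemma norm_le_Lipnorm f x : Lip0 f -> `|f x| <= Lipnorm f * `|x|.
Proof.
by move=> Lf; have := normB_le_Lipnorm x 0 Lf; case: Lf => -> _; rewrite !subr0.
Qed.

Lemma Lip0_cst0 : Lip0 (fun _ : X => 0 : Y).
Proof. by apply: (@Lip0_intro _ 0) => // x y; rewrite subrr normr0 mul0r. Qed.

Lemma Lipnorm_cst0 : Lipnorm (fun _ : X => 0 : Y) = 0.
Proof.
apply/le_anti; rewrite Lipnorm_ge0 ?andbT; last exact: Lip0_cst0.
by apply: Lipnorm_le => // x y; rewrite subrr normr0 mul0r.
Qed.

Lemma Lipnorm_eq0 f : Lip0 f -> Lipnorm f = 0 -> f = (fun _ => 0).
Proof.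
move=> Lf L0; apply/funext => x; apply/normr0_eq0/le_anti.
by rewrite normr_ge0 andbT -(mul0r `|x|) -L0 norm_le_Lipnorm.
Qed.

Lemma Lip0Z (a : R) f : Lip0 f -> Lip0 (fun x => a *: f x).
Proof.
move=> Lf; apply: (@Lip0_intro _ (`|a| * Lipnorm f)).
  by case: Lf => -> _; rewrite scaler0.
by move=> x y; rewrite -scalerBr normrZ -mulrA ler_wpM2l ?normB_le_Lipnorm.
Qed.

Lemma LipnormZ_le (a : R) f :
  Lip0 f -> Lipnorm (fun x => a *: f x) <= `|a| * Lipnorm f.
Proof.
move=> Lf; apply: Lipnorm_le; last by rewrite mulr_ge0 ?Lipnorm_ge0.
by move=> x y; rewrite -scalerBr normrZ -mulrA ler_wpM2l ?normB_le_Lipnorm.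
Qed.

End LipschitzNorm.

Section BoundedLinear.
Variables (R : realType) (X Y : completeNormedModType R).
Variable f : X -> Y.
Hypothesis flin : bounded_linear f.

Lemma bounded_linear0 : f 0 = 0.
Proof.
have [lin _] := flin; have := lin 1 0 0; rewrite !scale1r addr0 => f00.
by apply: (addrI (f 0)); rewrite addr0 -f00.
Qed.

Lemma bounded_linearB x y : f (x - y) = f x - f y.
Proof.
have [lin _] := flin.
have fN : f (- y) = - f y.
  by have := lin (-1) y 0; rewrite addr0 bounded_linear0 addr0 !scaleN1r.
by have := lin 1 x (- y); rewrite !scale1r fN.
Qed.

Lemma bounded_linear_Lip0 : Lip0 f.
Proof.
have [_ [C fC]] := flin; apply: (@Lip0_intro _ _ _ f `|C|) bounded_linear0 _.
move=> x y; rewrite -bounded_linearB (le_trans (fC _)) //.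
by rewrite ler_wpM2r ?ler_norm.
Qed.

Lemma comb_bounded_linear (s : seq (R * X)) : comb s f = f (beta_comb s).
Proof.
have [lin _] := flin; rewrite /comb /beta_comb.
elim: s => [|p s IHs]; first by rewrite !big_nil bounded_linear0.
by rewrite !big_cons lin IHs.
Qed.

End BoundedLinear.

Section LipDualOperators.
Variables (R : realType) (X Y : completeNormedModType R).
Implicit Types (f : X -> Y) (G H : (X -> Y) -> Y).

Lemma lipdual_op0 G : lipdual_op G -> G (fun _ => 0) = 0.
Proof.
move=> [lin _]; have := lin 1 _ _ (@Lip0_cst0 R X Y) (@Lip0_cst0 R X Y).
under [fun x => _]funext => x do rewrite scaler0 addr0.
by rewrite scale1r => /eqP; rewrite -subr_eq subrr eq_sym => /eqP.
Qed.

Lemma lipdual_opZ G (a : R) f :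
  lipdual_op G -> Lip0 f -> G (fun x => a *: f x) = a *: G f.
Proof.
move=> lG Lf; have [lin _] := lG; have := lin a _ _ Lf (@Lip0_cst0 R X Y).
by under [fun x => _]funext => x do rewrite addr0; rewrite lipdual_op0 // addr0.
Qed.

Lemma lipdual_opB G H :
  lipdual_op G -> lipdual_op H -> lipdual_op (fun f => G f - H f).
Proof.
move=> [Glin [CG GC]] [Hlin [CH HC]]; split.
  by move=> a f g Lf Lg; rewrite Glin // Hlin // scalerBr opprD addrACA.
exists (CG + CH) => f Lf; rewrite mulrDl (le_trans (ler_normB _ _)) //.
exact: lerD (GC f Lf) (HC f Lf).
Qed.

Lemma comb_lipdual_op (s : seq (R * X)) : lipdual_op (@comb R X Y s).
Proof.
split.
  move=> a f g _ _; rewrite /comb /delta scaler_sumr -big_split /=.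
  by apply: eq_bigr => p _; rewrite scalerDr !scalerA mulrC.
exists (\sum_(p <- s) `|p.1| * `|p.2|) => f Lf.
rewrite /comb mulr_suml (le_trans (ler_norm_sum _ _ _)) //.
apply: ler_sum => p _; rewrite normrZ -mulrA ler_wpM2l // mulrC.
exact: norm_le_Lipnorm.
Qed.

Lemma norm_le_opnorm_unit G f :
  lipdual_op G -> Lip0 f -> Lipnorm f <= 1 -> `|G f| <= opnorm G.
Proof.
move=> [_ [C GC]] Lf f1; apply: ub_le_sup; last by exists f.
exists `|C| => _ [g [Lg g1] <-]; rewrite (le_trans (GC g Lg)) //.
rewrite (le_trans (ler_norm _)) // normrM (ger0_norm (Lipnorm_ge0 Lg)).
by rewrite ler_piMr.
Qed.

Lemma norm_le_opnorm G f :
  lipdual_op G -> Lip0 f -> `|G f| <= opnorm G * Lipnorm f.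
Proof.
move=> lG Lf; have := Lipnorm_ge0 Lf; rewrite le_eqVlt => /orP[/eqP L0|L0].
  by rewrite -L0 mulr0 (Lipnorm_eq0 Lf) ?lipdual_op0 ?normr0.
have Li0 : 0 < (Lipnorm f)^-1 by rewrite invr_gt0.
have := norm_le_opnorm_unit lG (Lip0Z (Lipnorm f)^-1 Lf).
rewrite lipdual_opZ // normrZ gtr0_norm // ler_pdivrMl // mulrC; apply.
by rewrite (le_trans (LipnormZ_le _ Lf)) // gtr0_norm // mulVf ?gt_eqF.
Qed.

Lemma opnorm_cst0 : opnorm (fun _ : X -> Y => 0 : Y) = 0.
Proof.
rewrite /opnorm -[RHS](sup1 (0 : R)); congr sup.
apply/seteqP; split => r; first by case=> f _ <-; rewrite normr0.
move=> ->; exists (fun _ => 0); last by rewrite normr0.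
by split; [exact: Lip0_cst0 | rewrite Lipnorm_cst0].
Qed.

End LipDualOperators.

Section KernelOfBeta.
Variables (R : realType) (X Y : completeNormedModType R).
Implicit Types (f : X -> Y) (G : (X -> Y) -> Y) (s : seq (R * X)).

Lemma opnorm_comb_subrr s : opnorm (fun f => @comb R X Y s f - comb s f) = 0.
Proof. by under [fun f => _]funext => f do rewrite subrr; exact: opnorm_cst0.
Qed.

Lemma FY_comb s : FY (@comb R X Y s).
Proof.
split; first exact: comb_lipdual_op.
by move=> e e0; exists s; rewrite opnorm_comb_subrr ltW.
Qed.

Lemma beta_is_comb s : beta_is (@comb R X Y s) (beta_comb s).
Proof. by exists (fun=> s); rewrite opnorm_comb_subrr; split; exact: cvg_cst.
Qed.

Lemma in_ker_beta_comb s : beta_comb s = 0 -> in_ker_beta (@comb R X Y s).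
Proof.
by move=> s0; split; [exact: FY_comb | rewrite -s0; exact: beta_is_comb].
Qed.

Lemma cvg_comb G (s : nat -> seq (R * X)) f :
  lipdual_op G -> Lip0 f ->
  (fun n => opnorm (fun g => G g - comb (s n) g)) @ \oo --> 0 ->
  (fun n => comb (s n) f) @ \oo --> G f.
Proof.
move=> lG Lf s_cvg.
have -> : (fun n => comb (s n) f) = (fun n => G f - (G f - comb (s n) f)).
  by apply/funext => n; rewrite opprB addrC subrK.
rewrite -[l in _ --> l]subr0; apply: cvgB; first exact: cvg_cst.
pose bound n := opnorm (fun g => G g - comb (s n) g) * Lipnorm f.
apply: (@cvg0_norm_le _ _ _ bound).
  move=> n; exact: norm_le_opnorm (lipdual_opB lG (comb_lipdual_op Y (s n))) Lf.
by rewrite -(mul0r (Lipnorm f)); apply: cvgMl.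
Qed.

Lemma bounded_linear_ker_beta f G :
  bounded_linear f -> in_ker_beta G -> G f = 0.
Proof.
move=> flin [[lG _] [s [s_cvg beta_cvg]]].
have Lf := bounded_linear_Lip0 flin.
apply: norm_cvg_unique (cvg_comb lG Lf s_cvg) _.
have -> : (fun n => comb (s n) f) = (fun n => f (beta_comb (s n))).
  by apply/funext => n; exact: comb_bounded_linear.
apply: (cvg0_norm_le (fun n => norm_le_Lipnorm _ Lf)).
rewrite -(mulr0 (Lipnorm f)); apply: cvgMr; rewrite -(normr0 X).
exact: cvg_norm.
Qed.

Lemma ker_beta_annihilator_linear f :
  (forall G, in_ker_beta G -> G f = 0) ->
  forall (a : R) x y, f (a *: x + y) = a *: f x + f y.
Proof.
move=> fker a x y.
pose s : seq (R * X) := [:: (1, a *: x + y); (- a, x); (-1, y)].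
have s0 : beta_comb s = 0.
  rewrite /beta_comb !big_cons big_nil scale1r scaleNr scaleN1r addr0.
  by rewrite addrACA !subrr addr0.
have := fker _ (in_ker_beta_comb s0).
rewrite /comb /delta !big_cons big_nil /= scale1r scaleNr scaleN1r addr0.
by rewrite -opprD => /subr0_eq.
Qed.

End KernelOfBeta.

Theorem mainTheorem11 (R : realType) (X Y : completeNormedModType R)
  (hY : exists y : Y, y != 0) (f : X -> Y) :
  bounded_linear f <->
  (Lip0 f /\ forall G : (X -> Y) -> Y, in_ker_beta G -> G f = 0).
Proof.
split=> [flin | [Lf fker]].
  split=> [|G]; first exact: bounded_linear_Lip0.
  exact: bounded_linear_ker_beta.
split; first exact: ker_beta_annihilator_linear.
by exists (Lipnorm f) => x; exact: norm_le_Lipnorm.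
Qed.
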